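(* Let $\varepsilon>0$ and let $f:\{0,1\}^n\to\{0,1\}$ be a symmetric function with $\mathrm{bias}(f)\ge\varepsilon$. Draw $x_1,\dots,x_n$ independently and uniformly from $\{0,1\}$, and let $\tau^{(0)}$ be the smallest $t$ such that the restriction of $f$ obtained by fixing the first $t$ variables to $x_1,\dots,x_t$ is a constant function. Then $\mathbb{E}[\tau^{(0)}]\ge\Omega\!\left(\frac{n}{\log(1/\varepsilon)}\right)$, with an absolute implied constant.
   Context: $f$ is symmetric if $f(x)=f(y)$ whenever $x,y$ have the same number of ones. $\mathrm{bias}(f)=\min\{\Pr_{x}[f(x)\ne0],\Pr_x[f(x)\ne1]\}$ for uniform $x\in\{0,1\}^n$. *)

From HB Require Import structures.
From mathcomp Require Import all_boot all_order all_algebra.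
From mathcomp Require Import reals exp.
Set Implicit Arguments. Unset Strict Implicit. Unset Printing Implicit Defensive.
Import Order.TTheory GRing.Theory Num.Theory.
Local Open Scope ring_scope.

(* Points of the hypercube {0,1}^n; variable x_{i+1} is [x i], for i : 'I_n. *)
Definition cube (n : nat) := {ffun 'I_n -> bool}.

Definition weight n (x : cube n) : nat := #|[set i | x i]|.

Definition symmetric_fun n (f : cube n -> bool) : Prop :=
  forall x y : cube n, weight x = weight y -> f x = f y.

Definition prob_eq (R : realType) n (f : cube n -> bool) (b : bool) : R :=
  #|[set x : cube n | f x == b]|%:R / (2 ^ n)%:R.

Definition bias (R : realType) n (f : cube n -> bool) : R :=
  Num.min (prob_eq R f true) (prob_eq R f false).

Definition const_after n (f : cube n -> bool) (x : cube n) (t : nat) : bool :=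
  [forall y : cube n,
     [forall i : 'I_n, (i < t)%N ==> (y i == x i)] ==> (f y == f x)].

(* tau^(0)(x): the smallest t (0 <= t <= n) such that const_after holds
   (it always holds for t = n, so [find] returns the least such t). *)
Definition tau0 n (f : cube n -> bool) (x : cube n) : nat :=
  find (const_after f x) (iota 0 n.+1).

Definition expected_tau0 (R : realType) n (f : cube n -> bool) : R :=
  (\sum_(x : cube n) (tau0 f x)%:R) / (2 ^ n)%:R.

From HB Require Import structures.
From mathcomp Require Import all_boot all_order all_algebra.
From mathcomp Require Import reals exp.
From mathcomp Require Import zify lra.
Import Order.TTheory GRing.Theory Num.Theory.
Set Implicit Arguments. Unset Strict Implicit. Unset Printing Implicit Defensive.

(** If fixing the first [s] bits as in [x] makes a symmetric [f] constant, then
   [f y = f x] for every [y] of weight in [[s, n - s]], since filling the free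
   bits of [x] with ones from the left reaches every such weight.  Hence [f]
   disagrees with [f x] only on weights [< s] or [> n - s], a set of
   probability at most [2^(s+1) (3/4)^n].  Taking logarithms, every
   [x] has [tau0 x >= n/4 - ln(1/eps) - 1]; together with [tau0 x >= 1] this
   gives [E[tau0] >= n / (32 ln(1/eps))]. *)

Lemma card_mul_le_sum (T : finType) (P : {set T}) (g : T -> nat) m c :
  (forall x, x \in P -> m <= c * g x)%N -> (#|P| * m <= c * \sum_x g x)%N.
Proof.
move=> Pg; rewrite -sum_nat_const big_distrr /= (big_mkcond (mem P)) /=.
by apply: leq_sum => x _; case: ifP => // /Pg.
Qed.

Section Cube.

Variable n : nat.
Implicit Types (x y : cube n) (f : cube n -> bool).

Lemma weight_le x : (weight x <= n)%N.
Proof. by rewrite /weight -[leqRHS]card_ord max_card. Qed.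

Lemma card_cube : #|{: cube n}| = (2 ^ n)%N.
Proof. by rewrite card_ffun card_bool card_ord. Qed.

Lemma prod_weight x a b :
  \prod_(i < n) (if x i then a else b) = (a ^ weight x * b ^ (n - weight x))%N.
Proof.
rewrite (bigID (fun i => x i)) /=.
rewrite (eq_bigr (fun _ => a)); last by move=> i ->.
rewrite [X in (_ * X)%N](eq_bigr (fun _ => b)); last by move=> i /negbTE ->.
have wC : (n - weight x)%N = #|~: [set i | x i]|.
  have := cardsC [set i : 'I_n | x i]; rewrite card_ord /weight => hC.
  by rewrite -[X in (X - _)%N]hC addKn.
rewrite wC /weight -!prod_nat_const.
by congr (_ * _)%N; apply: eq_bigl => i; rewrite !inE.
Qed.

Lemma sum_weight_exp a b :
  (\sum_(x : cube n) a ^ weight x * b ^ (n - weight x) = (a + b) ^ n)%N.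
Proof.
under eq_bigr => x _ do rewrite -prod_weight.
rewrite -(bigA_distr_bigA (fun _ (j : bool) => if j then a else b)) /=.
by under eq_bigr => i _ do rewrite big_bool; rewrite prod_nat_const card_ord.
Qed.

Lemma card_weight_lt s :
  (#|[set x : cube n | weight x < s]| * 2 ^ n <= 2 ^ s * 3 ^ n)%N.
Proof.
rewrite -(sum_weight_exp 1 2); apply: card_mul_le_sum => x; rewrite inE => ltws.
by rewrite exp1n mul1n -expnD leq_exp2l //; have := weight_le x; lia.
Qed.

Lemma card_weight_gt s :
  (#|[set x : cube n | n - s < weight x]| * 2 ^ n <= 2 ^ s * 3 ^ n)%N.
Proof.
rewrite -(sum_weight_exp 2 1); apply: card_mul_le_sum => x; rewrite inE => ltsw.
by rewrite exp1n muln1 -expnD leq_exp2l //; lia.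
Qed.

Definition pad x (s j : nat) : cube n :=
  [ffun i : 'I_n => if (i < s)%N then x i else (i < s + j)%N].

Lemma weight_padS x s j : (s + j < n)%N ->
  weight (pad x s j.+1) = (weight (pad x s j)).+1.
Proof.
rewrite /weight => ltn; pose k : 'I_n := Ordinal ltn.
have -> : [set i | pad x s j.+1 i] = k |: [set i | pad x s j i].
  apply/setP => i; rewrite !inE !ffunE -(inj_eq val_inj) /=.
  case: (ltnP i s) => [ltis|lesi]; last by rewrite addnS ltnS leq_eqVlt.
  by rewrite (_ : (i == s + j :> nat) = false) //; apply/negbTE; lia.
by rewrite cardsU1 inE ffunE /= ltnn ltnNge leq_addr.
Qed.

Lemma weight_pad x s j : (s + j <= n)%N ->
  weight (pad x s j) = (weight (pad x s 0) + j)%N.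
Proof.
elim: j => [|j IHj] lesjn; first by rewrite addn0.
by rewrite weight_padS ?IHj ?addnS //; lia.
Qed.

Lemma pad_prefix x s j (i : 'I_n) : (i < s)%N -> pad x s j i = x i.
Proof. by rewrite ffunE => ->. Qed.

Lemma const_after_pad f x s j : const_after f x s -> f (pad x s j) = f x.
Proof.
move=> /forallP/(_ (pad x s j))/implyP/(_ _)/eqP; apply.
by apply/forallP => i; apply/implyP => ltis; rewrite pad_prefix.
Qed.

Lemma symmetric_const_after f x y s : symmetric_fun f -> (s <= n)%N ->
  const_after f x s -> (s <= weight y <= n - s)%N -> f y = f x.
Proof.
move=> fsym lesn fx_const /andP[lesy leyns].
have w_full := @weight_pad x s (n - s) (eq_leq (subnKC lesn)).
have := weight_le (pad x s (n - s)); rewrite w_full => le_w0.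
have w_y : weight (pad x s (weight y - weight (pad x s 0))) = weight y.
  by rewrite weight_pad; lia.
by rewrite (fsym _ _ (esym w_y)) const_after_pad.
Qed.

Lemma card_disagree_const_after f x s : symmetric_fun f -> (s <= n)%N ->
  const_after f x s -> (#|[set y | f y == ~~ f x]| * 2 ^ n <= 2 ^ s.+1 * 3 ^ n)%N.
Proof.
move=> fsym lesn fx_const.
have disagree_sub : [set y | f y == ~~ f x]
    \subset [set y : cube n | weight y < s] :|: [set y | n - s < weight y].
  apply/subsetP => y; rewrite !inE => /eqP fy.
  case: (ltnP (weight y) s) => //= lesy; case: ltnP => //= leyns.
  have w_mid : (s <= weight y <= n - s)%N by rewrite lesy leyns.
  by move: fy; rewrite (symmetric_const_after fsym lesn fx_const w_mid); case: (f x).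
apply: leq_trans (leq_mul (subset_leq_card disagree_sub) (leqnn _)) _.
apply: leq_trans (leq_mul (leq_card_setU _ _) (leqnn _)) _.
by rewrite mulnDl expnS mul2n -addnn mulnDl leq_add ?card_weight_lt ?card_weight_gt.
Qed.

Lemma const_after0 f x y : const_after f x 0 -> f y = f x.
Proof. by move=> /forallP/(_ y)/implyP/(_ _)/eqP; apply; apply/forallP. Qed.

Lemma const_after_n f x : const_after f x n.
Proof.
apply/forallP => y; apply/implyP => /forallP y_eq_x; apply/eqP; congr f.
by apply/ffunP => i; apply/eqP/(implyP (y_eq_x i)).
Qed.

Lemma has_const_after f x : has (const_after f x) (iota 0 n.+1).
Proof. by apply/hasP; exists n; rewrite ?mem_iota ?add0n ?ltnSn ?const_after_n. Qed.

Lemma tau0_le f x : (tau0 f x <= n)%N.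
Proof. by have := has_const_after f x; rewrite has_find size_iota. Qed.

Lemma const_after_tau0 f x : const_after f x (tau0 f x).
Proof.
by have := nth_find 0 (has_const_after f x); rewrite nth_iota ?add0n // ltnS tau0_le.
Qed.

End Cube.

Local Open Scope ring_scope.

Section Logarithm.

Variable R : realType.

Lemma ln2_le1 : ln (2 : R) <= 1.
Proof. by have := @le_ln1Dx R 1 ltac:(lra); rewrite (_ : 1 + 1 = 2). Qed.

Lemma ln_3_4_le : ln (3 / 4 : R) <= - (1 / 4).
Proof.
have := @le_ln1Dx R (- (1 / 4)) ltac:(lra).
by rewrite (_ : 1 + - (1 / 4) = 3 / 4) //; lra.
Qed.

Lemma ln_inv_ge (x : R) : 0 < x -> 1 - x <= ln x^-1.
Proof.
move=> x_gt0; rewrite lnV ?posrE //.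
by have := @le_ln1Dx R (x - 1) ltac:(lra); rewrite addrC subrK; lra.
Qed.

End Logarithm.

Section Probability.

Variables (R : realType) (n : nat) (f : cube n -> bool).

Lemma bias_le_prob_eq b : bias R f <= prob_eq R f b.
Proof. by rewrite /bias ge_min; case: b; rewrite lexx ?orbT. Qed.

Lemma prob_eq_true_false : prob_eq R f true + prob_eq R f false = 1.
Proof.
rewrite /prob_eq -mulrDl -natrD.
have -> : [set x | f x == false] = ~: [set x | f x == true].
  by apply/setP => x; rewrite !inE; case: (f x).
by rewrite cardsC card_cube divff // pnatr_eq0 -lt0n expn_gt0.
Qed.

Lemma bias_le_half : bias R f <= 1 / 2.
Proof.
by have := bias_le_prob_eq true; have := bias_le_prob_eq false;
  have := prob_eq_true_false; lra.
Qed.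

Lemma bias_le_const_after x s : symmetric_fun f -> (s <= n)%N ->
  const_after f x s -> bias R f <= 2 ^+ s.+1 * (3 / 4) ^+ n.
Proof.
move=> fsym lesn fx_const; apply: le_trans (bias_le_prob_eq (~~ f x)) _.
have := card_disagree_const_after fsym lesn fx_const.
rewrite -(ler_nat R) /prob_eq !natrM !natrX expr_div_n (_ : 4 = 2 * 2 :> R); last lra.
rewrite exprMn invfM !mulrA ler_pM2r ?invr_gt0 ?exprn_gt0 //.
by rewrite ler_pdivlMr ?exprn_gt0.
Qed.

Lemma tau0_gt0 x : 0 < bias R f -> (0 < tau0 f x)%N.
Proof.
rewrite lt0n; apply: contraTN => /eqP tau0_0.
have := const_after_tau0 f x; rewrite tau0_0 => /const_after0 f_const.
rewrite -leNgt; apply: le_trans (bias_le_prob_eq (~~ f x)) _; rewrite /prob_eq.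
have -> : [set y | f y == ~~ f x] = set0.
  by apply/setP => y; rewrite !inE f_const; case: (f x).
by rewrite cards0 mul0r.
Qed.

Lemma expected_tau0_ge (a : R) :
  (forall x, a <= (tau0 f x)%:R) -> a <= expected_tau0 R f.
Proof.
move=> le_a_tau0; rewrite /expected_tau0 ler_pdivlMr ?ltr0n ?expn_gt0 //.
rewrite -card_cube mulr_natr -sumr_const.
by apply: ler_sum => x _; apply: le_a_tau0.
Qed.

Lemma tau0_ge_ln (eps : R) x : symmetric_fun f -> 0 < eps -> eps <= bias R f ->
  n%:R / 4 <= ln eps^-1 + (tau0 f x)%:R + 1.
Proof.
move=> fsym eps_gt0 eps_le_bias; set s := tau0 f x.
have three_quarters_gt0 : 0 < 3 / 4 :> R by lra.
have : eps <= 2 ^+ s.+1 * (3 / 4) ^+ n.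
  exact: le_trans eps_le_bias
    (bias_le_const_after fsym (tau0_le f x) (const_after_tau0 f x)).
rewrite -ler_ln ?posrE //; last by rewrite mulr_gt0 ?exprn_gt0.
rewrite lnM ?posrE; [|exact: exprn_gt0..].
rewrite !lnXn // -[ln 2 *+ _]mulr_natr -[ln (3 / 4) *+ _]mulr_natr lnV ?posrE //.
have ln2_term : ln 2 * s.+1%:R <= s.+1%:R :> R.
  exact: ler_piMl (ler0n _ _) (ln2_le1 R).
have natr_s : s%:R + 1 = s.+1%:R :> R := natr1 s.
have ln3_4_term := ler_wpM2r (ler0n R n) (ln_3_4_le R).
lra.
Qed.

End Probability.

Theorem mainTheorem7 :
  exists c : rat, 0 < c /\
    forall (R : realType) (n : nat) (eps : R) (f : cube n -> bool),
      0 < eps -> symmetric_fun f -> eps <= bias R f ->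
      ratr c * n%:R / ln (eps^-1) <= expected_tau0 R f.
Proof.
exists 32%:R^-1; split; first by rewrite invr_gt0 ltr0n.
move=> R n eps f eps_gt0 fsym eps_le_bias; rewrite fmorphV /= ratr_nat.
set L := ln eps^-1; set E := expected_tau0 R f.
have L_ge : 1 / 2 <= L.
  by have := ln_inv_ge eps_gt0; have := bias_le_half R f; rewrite -/L; lra.
have tau0_ge1 x : 1 <= (tau0 f x)%:R :> R.
  by rewrite ler1n (tau0_gt0 (R := R)) // (lt_le_trans eps_gt0).
have E_ge1 : 1 <= E by apply: expected_tau0_ge.
have E_ge : n%:R / 8 - L / 2 <= E.
  apply: expected_tau0_ge => x.
  by have := tau0_ge_ln x fsym eps_gt0 eps_le_bias; have := tau0_ge1 x; rewrite -/L; lra.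
rewrite ler_pdivrMr; last by lra.
have [n_small|n_large] := lerP n%:R (8 * L); nra.
Qed.
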